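(* For each $k\ge 1$: if $k$ is odd, then $\Sigma^1_k\text{-}\mathrm{KROM}^r\equiv\Sigma^1_{k+1}\text{-}\mathrm{KROM}^r$; if $k$ is even, then $\Pi^1_k\text{-}\mathrm{KROM}^r\equiv\Pi^1_{k+1}\text{-}\mathrm{KROM}^r$ (equivalence on all finite structures).
   Context: All structures are finite; every vocabulary contains equality. For a vocabulary $\tau$, an SO-KROM$^r(\tau)$ formula is a second-order formula of the form $Q_1R_1\cdots Q_mR_m\forall\bar{x}(C_1\wedge\cdots\wedge C_n)$, where each $Q_i\in\{\forall,\exists\}$, $R_1,\dots,R_m$ are second-order relation variables, and each clause $C_j$ is a disjunction $\beta_1\vee\cdots\vee\beta_q\vee H_1\vee H_2$ in which each $\beta_s$ is an atomic or negated atomic $\tau$-formula ($P\bar{y}$ or $\neg P\bar{y}$, $P\in\tau$, including equality), and each $H_t$ is one of $R_i\bar{z}$, $\neg R_i\bar{z}$, $\exists z_1\cdots\exists z_{r}R_i z_1\dots z_r$ ($r$ the arity of $R_i$), or $\bot$. $\Sigma^1_k\text{-}\mathrm{KROM}^r$ (resp. $\Pi^1_k\text{-}\mathrm{KROM}^r$) is the set of SO-KROM$^r$ formulas whose second-order prefix starts with an existential (resp. universal) quantifier and has exactly $k-1$ alternations between blocks of existential and universal quantifiers. For logics $\mathcal{L}_1,\mathcal{L}_2$, $\mathcal{L}_1\le\mathcal{L}_2$ means every $\mathcal{L}_1$ formula is equivalent to some $\mathcal{L}_2$ formula over the same vocabulary, and $\mathcal{L}_1\equiv\mathcal{L}_2$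 means both $\mathcal{L}_1\le\mathcal{L}_2$ and $\mathcal{L}_2\le\mathcal{L}_1$. *)

From mathcomp Require Import all_boot.
Set Implicit Arguments. Unset Strict Implicit. Unset Printing Implicit Defensive.

(* A vocabulary is the list of arities of its relation symbols;
   equality is always available as a built-in atom. *)
Definition vocab := seq nat.

(* First-order literals over vocabulary tau with m first-order variables 'I_m.
   pos = true : atom, pos = false : negated atom. *)
Inductive folit (tau : vocab) (m : nat) : Type :=
  | FRel (pos : bool) (s : 'I_(size tau)) (ys : (nth 0 tau s).-tuple 'I_m)
  | FEq (pos : bool) (x y : 'I_m).

(* Second-order disjuncts H_t; ar is the list of arities of the SO variables
   R_1 ... R_n (in prefix order). *)
Inductive sohead (m : nat) (ar : seq nat) : Type :=
  | HAtom (pos : bool) (i : 'I_(size ar)) (zs : (nth 0 ar i).-tuple 'I_m)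
  | HEx (i : 'I_(size ar))   (* exists z_1 .. z_r, R_i z_1 .. z_r *)
  | HBot.

Record clause (tau : vocab) (m : nat) (ar : seq nat) := Clause {
  cl_lits : seq (folit tau m);
  cl_h1 : sohead m ar;
  cl_h2 : sohead m ar }.

(* An SO-KROM^r(tau) formula:
   Q_1 R_1 ... Q_n R_n  forall x_0 .. x_(nfo-1)  (C_1 /\ ... /\ C_l).
   so_pre lists (Q_i, arity of R_i), with Q_i = true for exists, false for forall. *)
Record sokrom (tau : vocab) := SOKrom {
  so_nfo : nat;
  so_pre : seq (bool * nat);
  so_cls : seq (clause tau so_nfo (map snd so_pre)) }.

Record structure (tau : vocab) := Structure {
  dom : finType;
  interp : forall s : 'I_(size tau), {set (nth 0 tau s).-tuple dom} }.

(* Assignments of second-order variables: index -> relation, a relation being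
   represented by its characteristic function on sequences. *)
Definition soasg (A : finType) := nat -> seq A -> bool.

Definition rel_of (A : finType) (n : nat) (R : {set n.-tuple A}) : seq A -> bool :=
  fun s => [exists t : n.-tuple A, (t \in R) && (tval t == s)].

Section Semantics.
Variables (tau : vocab) (M : structure tau).
Local Notation A := (dom M).

Definition eval_lit (m : nat) (v : 'I_m -> A) (l : folit tau m) : bool :=
  match l with
  | FRel pos s ys => (map_tuple v ys \in interp M s) == pos
  | FEq pos x y => (v x == v y) == pos
  end.

Definition eval_head (m : nat) (ar : seq nat) (sg : soasg A) (v : 'I_m -> A)
    (h : sohead m ar) : bool :=
  match h with
  | HAtom pos i zs => sg i (map v zs) == pos
  | HEx i => [exists t : (nth 0 ar i).-tuple A, sg i t]
  | HBot => false
  end.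

Definition eval_clause (m : nat) (ar : seq nat) (sg : soasg A) (v : 'I_m -> A)
    (c : clause tau m ar) : bool :=
  [|| has (eval_lit v) (cl_lits c), eval_head sg v (cl_h1 c) | eval_head sg v (cl_h2 c)].

(* Evaluate the SO prefix; the k-th quantified variable gets index k. *)
Fixpoint eval_pre (pre : seq (bool * nat)) (k : nat) (sg : soasg A)
    (body : soasg A -> Prop) : Prop :=
  match pre with
  | [::] => body sg
  | (q, n) :: pre' =>
      let upd (R : {set n.-tuple A}) : soasg A :=
        fun j => if j == k then rel_of R else sg j in
      if q then exists R : {set n.-tuple A}, eval_pre pre' k.+1 (upd R) body
      else forall R : {set n.-tuple A}, eval_pre pre' k.+1 (upd R) body
  end.

Definition sat (phi : sokrom tau) : Prop :=
  eval_pre (so_pre phi) 0 (fun _ _ => false)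
    (fun sg => forall v : 'I_(so_nfo phi) -> A,
        all (eval_clause sg v) (so_cls phi)).

End Semantics.

Fixpoint alternations (qs : seq bool) : nat :=
  match qs with
  | q1 :: ((q2 :: _) as qs') => (q1 != q2) + alternations qs'
  | _ => 0
  end.

Definition fragment := forall tau : vocab, sokrom tau -> Prop.

Definition SigmaKrom (k : nat) : fragment := fun tau phi =>
  let qs := map fst (so_pre phi) in
  head false qs = true /\ alternations qs = k.-1.

Definition PiKrom (k : nat) : fragment := fun tau phi =>
  let qs := map fst (so_pre phi) in
  head true qs = false /\ alternations qs = k.-1.

Definition equivalent (tau : vocab) (phi psi : sokrom tau) : Prop :=
  forall M : structure tau, 0 < #|dom M| -> (sat M phi <-> sat M psi).

Definition frag_le (L1 L2 : fragment) : Prop :=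
  forall (tau : vocab) (phi : sokrom tau), L1 tau phi ->
    exists psi : sokrom tau, L2 tau psi /\ equivalent phi psi.

Definition frag_equiv (L1 L2 : fragment) : Prop := frag_le L1 L2 /\ frag_le L2 L1.

From mathcomp Require Import all_boot.
Set Implicit Arguments. Unset Strict Implicit. Unset Printing Implicit Defensive.

(* A universal second-order quantifier [forall R] at the end of the prefix can be
   pushed through the conjunction of Krom clauses and eliminated clause by clause.
   If R occurs in a clause with both signs, [forall R, b \/ R z \/ ~ R z'] amounts
   to [b \/ z = z'] (instantiate R by the singleton {z'}), i.e. to the Krom clauses
   [b \/ z_i = z'_i], while [b \/ ~ R z \/ exists z, R z] is valid. Otherwise all
   occurrences of R have the same sign, and instantiating R by the empty or by the
   full relation falsifies all of them, so they can be replaced by bottom.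
   Removing the final universal block of a Sigma_(k+1) (k odd) or Pi_(k+1) (k even)
   prefix this way removes its last alternation; conversely, appending a vacuous
   [forall] to a Sigma_k or Pi_k prefix, which ends with an existential block, adds
   one. Neither step needs the structure to be nonempty. *)

Section Relations.
Variable A : finType.

Definition set_rel n (sg : soasg A) N (R : {set n.-tuple A}) : soasg A :=
  fun j => if j == N then rel_of R else sg j.

Lemma rel_of0 n (s : seq A) : rel_of (set0 : {set n.-tuple A}) s = false.
Proof. by apply/existsP => -[t]; rewrite in_set0. Qed.

Lemma rel_ofT n (s : seq A) : rel_of (setT : {set n.-tuple A}) s = (size s == n).
Proof.
apply/existsP/eqP => [[t /andP[_ /eqP <-]]|sz_s]; first exact: size_tuple.
by exists (Tuple (introT eqP sz_s)); rewrite in_setT eqxx.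
Qed.

Lemma rel_of1 n (t : n.-tuple A) (s : seq A) : rel_of [set t] s = (tval t == s).
Proof. by apply/existsP/idP => [[t' /andP[/set1P -> //]]|ts]; exists t; rewrite set11. Qed.

Lemma exists_tuple_of k (f : seq A -> bool) (s : seq A) :
  size s = k -> f s -> [exists t : k.-tuple A, f t].
Proof. by move=> sz_s fs; apply/existsP; exists (Tuple (introT eqP sz_s)). Qed.

Lemma rel_of_size n (R : {set n.-tuple A}) (s : seq A) : rel_of R s -> size s = n.
Proof. by case/existsP=> t /andP[_ /eqP <-]; apply: size_tuple. Qed.

Lemma forall_rel_complementary n (x y : seq A) (p b : bool) :
  size x = n -> size y = n ->
  (forall R : {set n.-tuple A}, [|| b, rel_of R x == p | rel_of R y == ~~ p]) <->
  b || (x == y).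
Proof.
move=> sz_x sz_y; split=> [allR|/orP[-> //|/eqP <-] R]; last first.
  by case: (rel_of R x); case: p; rewrite orbT.
case: b allR => // allR; case: p allR => allR.
- by have := allR [set Tuple (introT eqP sz_y)]; rewrite !rel_of1 /= eqxx orbF eqb_id eq_sym.
- by have := allR [set Tuple (introT eqP sz_x)]; rewrite !rel_of1 /= eqxx /= eqb_id.
Qed.

End Relations.

Section PrefixSemantics.
Variables (tau : vocab) (M : structure tau).
Local Notation A := (dom M).

Lemma eval_pre_ext pre k (sg : soasg A) (body1 body2 : soasg A -> Prop) :
  (forall s, body1 s <-> body2 s) ->
  eval_pre pre k sg body1 <-> eval_pre pre k sg body2.
Proof.
elim: pre k sg => [|[[] n] pre IH] k sg eq_body /=; first exact: eq_body.
- by split=> -[R HR]; exists R; apply/(IH _ _ eq_body).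
- by split=> HR R; apply/(IH _ _ eq_body).
Qed.

Lemma eval_pre_rcons_forall pre n k (sg : soasg A) body :
  eval_pre (rcons pre (false, n)) k sg body <->
  eval_pre pre k sg
    (fun s => forall R : {set n.-tuple A}, body (set_rel s (k + size pre) R)).
Proof.
elim: pre k sg => [|[[] n'] pre IH] k sg /=; first by rewrite addn0.
- by rewrite -addSnnS; split=> -[R HR]; exists R; apply/IH.
- by rewrite -addSnnS; split=> HR R; apply/IH.
Qed.

End PrefixSemantics.

Lemma all_zip_eq_orb (T : Type) (U : eqType) (f : T -> U) (b : bool) (s1 s2 : seq T) :
  size s1 = size s2 ->
  all (fun a => (f a.1 == f a.2) || b) (zip s1 s2) = b || (map f s1 == map f s2).
Proof.
elim: s1 s2 => [|x s1 IH] [|y s2] //=; first by rewrite orbT.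
by case=> /IH -> {IH}; rewrite eqseq_cons; case: b; case: (f x == f y).
Qed.

Definition head_var m ar (h : sohead m ar) : option nat :=
  match h with HAtom _ i _ | HEx i => Some (nat_of_ord i) | HBot => None end.

Definition cast_head m ar ar2 (h : sohead m ar) : sohead m ar2 :=
  match h with
  | HAtom p i zs =>
      if (insub (i : nat) : option 'I_(size ar2)) is Some i2 then
        if (insub (tval zs) : option ((nth 0 ar2 i2).-tuple 'I_m)) is Some zs2
        then @HAtom m ar2 p i2 zs2 else HBot m ar2
      else HBot m ar2
  | HEx i =>
      if (insub (i : nat) : option 'I_(size ar2)) is Some i2 then @HEx m ar2 i2
      else HBot m ar2
  | HBot => HBot m ar2
  end.

Definition map_heads tau m ar ar2 (f : sohead m ar -> sohead m ar2)
    (c : clause tau m ar) : clause tau m ar2 :=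
  Clause (cl_lits c) (f (cl_h1 c)) (f (cl_h2 c)).

Section Heads.
Variables (tau : vocab) (M : structure tau) (m : nat) (ar ar2 : seq nat).
Implicit Types (sg : soasg (dom M)) (v : 'I_m -> dom M) (h : sohead m ar).

Lemma head_var_lt h i : head_var h = Some i -> i < size ar.
Proof. by case: h => [p j z|j|] //= [<-]. Qed.

Lemma head_var_cast h : head_var (cast_head ar2 h) \in [:: None; head_var h].
Proof.
rewrite !inE; case: h => [p i z|i|] //=; case: insubP => [i2 _ i2_i|_] //=.
- by case: insubP => //= *; rewrite i2_i.
- by rewrite i2_i.
Qed.

Lemma eval_cast_head sg v h :
  (forall i, head_var h = Some i -> i < size ar2 /\ nth 0 ar2 i = nth 0 ar i) ->
  eval_head sg v (cast_head ar2 h) = eval_head sg v h.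
Proof.
case: h => [p i z|i|] //= /(_ _ erefl) [lt_i_ar2 ar2_i].
all: case: insubP => [i2 _ /= i2_i|]; last by rewrite lt_i_ar2.
all: have {}i2_i : nat_of_ord i2 = i := i2_i.
- case: insubP => [z2 _ z2_z|]; last by rewrite size_tuple i2_i ar2_i eqxx.
  by rewrite /= z2_z i2_i.
- by rewrite /= i2_i; apply/idP/idP => /existsP [t sgt];
    apply: exists_tuple_of sgt; rewrite size_tuple ar2_i.
Qed.

Lemma eval_head_set_rel n sg N (R : {set n.-tuple (dom M)}) v h :
  head_var h != Some N -> eval_head (set_rel sg N R) v h = eval_head sg v h.
Proof.
by case: h => [p i z|i|] //= iN; rewrite /set_rel ifN_eq //; apply: contra iN => /eqP ->.
Qed.

End Heads.

Definition append_forall tau (phi : sokrom tau) : sokrom tau :=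
  @SOKrom tau (so_nfo phi) (rcons (so_pre phi) (false, 0))
    (map (map_heads (cast_head _)) (so_cls phi)).

Lemma eval_clause_cast_set_rel tau (M : structure tau) m ar ar2 n sg
    (R : {set n.-tuple (dom M)}) (v : 'I_m -> dom M) (c : clause tau m ar) :
  (forall i, i < size ar -> i < size ar2 /\ nth 0 ar2 i = nth 0 ar i) ->
  eval_clause (set_rel sg (size ar) R) v (map_heads (cast_head ar2) c) =
  eval_clause sg v c.
Proof.
move=> ar2_ar; suff eval_h (h : sohead m ar) :
    eval_head (set_rel sg (size ar) R) v (cast_head ar2 h) = eval_head sg v h.
  by rewrite /eval_clause /= !eval_h.
rewrite eval_head_set_rel ?eval_cast_head //; first by move=> i /head_var_lt /ar2_ar.
have := head_var_cast ar2 h; rewrite !inE => /orP[/eqP ->|/eqP ->] //.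
by case E: (head_var h) => [i|] //; apply: contraTneq (head_var_lt E) => [[->]]; rewrite ltnn.
Qed.

Lemma sat_append_forall tau (M : structure tau) (phi : sokrom tau) :
  sat M (append_forall phi) <-> sat M phi.
Proof.
case: phi => m pre cls; rewrite /sat /append_forall /=.
apply: iff_trans (eval_pre_rcons_forall _ _ _ _ _) _; apply: eval_pre_ext => s.
have ar2_ar i : i < size (map snd pre) ->
    i < size (map snd (rcons pre (false, 0))) /\
    nth 0 (map snd (rcons pre (false, 0))) i = nth 0 (map snd pre) i.
  move=> lt_i; rewrite map_rcons size_rcons nth_rcons lt_i; split=> //; exact: ltnW.
have lift_cls (R : {set 0.-tuple (dom M)}) v :
    all (eval_clause (set_rel s (size pre) R) v)
      (map (map_heads (cast_head (map snd (rcons pre (false, 0))))) cls) =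
    all (eval_clause s v) cls.
  rewrite all_map; apply: eq_all => c /=.
  by rewrite -(size_map snd) eval_clause_cast_set_rel.
rewrite add0n; split=> [allR v | allv R v]; last by rewrite lift_cls.
by rewrite -(lift_cls set0).
Qed.

Section Elimination.
Variables (tau : vocab) (m : nat) (ar ar2 : seq nat) (N : nat).
Implicit Types (h : sohead m ar) (c : clause tau m ar).

Definition sign_of h : option bool :=
  match h with
  | HAtom p i _ => if i == N :> nat then Some p else None
  | HEx i => if i == N :> nat then Some true else None
  | HBot => None
  end.

Definition complementary h1 h2 : bool :=
  if (sign_of h1, sign_of h2) is (Some p1, Some p2) then p1 != p2 else false.

Definition drop_head h : sohead m ar2 :=
  if sign_of h is None then cast_head ar2 h else HBot m ar2.

Definition elim_clause c : seq (clause tau m ar2) :=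
  if complementary (cl_h1 c) (cl_h2 c) then
    if (cl_h1 c, cl_h2 c) is (HAtom _ _ z1, HAtom _ _ z2) then
      [seq Clause (@FEq tau m true a.1 a.2 :: cl_lits c) (HBot m ar2) (HBot m ar2)
      | a <- zip (tval z1) (tval z2)]
    else [::]
  else [:: map_heads drop_head c].

Variables (M : structure tau) (n : nat).
Hypothesis ar2_ar : forall i, i < size ar -> i != N -> i < size ar2 /\ nth 0 ar2 i = nth 0 ar i.
Hypothesis arN : nth 0 ar N = n.
Variables (s : soasg (dom M)) (v : 'I_m -> dom M).

Definition kill_rel (p : bool) : {set n.-tuple (dom M)} := if p then set0 else setT.

Lemma size_map_var (i : 'I_(size ar)) (z : (nth 0 ar i).-tuple 'I_m) :
  i = N :> nat -> size (map v z) = n.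
Proof. by move=> iN; rewrite size_map size_tuple iN arN. Qed.

Lemma eval_drop_head h (R : {set n.-tuple (dom M)}) : sign_of h = None ->
  eval_head s v (drop_head h) = eval_head (set_rel s N R) v h.
Proof.
move=> h_free; have hN : head_var h != Some N.
  by case: h h_free => [p i z|i|] //=; case: eqP => // iN _; apply/eqP => -[/iN].
rewrite /drop_head h_free eval_cast_head ?eval_head_set_rel //.
move=> i hi; apply: ar2_ar; first exact: head_var_lt hi.
by apply: contra_neq hN => <-.
Qed.

Lemma eval_head_kill h p : sign_of h = Some p ->
  eval_head (set_rel s N (kill_rel p)) v h = false.
Proof.
case: h => [q i z|i|] //=; case: ifP => // iN [<-]; rewrite /set_rel iN /kill_rel.
- by case: q; rewrite ?rel_of0 // rel_ofT (size_map_var _ (eqP iN)) eqxx.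
- by apply/negbTE/existsP => -[t]; rewrite rel_of0.
Qed.

Lemma drop_head_sound h (R : {set n.-tuple (dom M)}) :
  eval_head s v (drop_head h) -> eval_head (set_rel s N R) v h.
Proof.
case h_free: (sign_of h) => [p|]; first by rewrite /drop_head h_free.
by rewrite (eval_drop_head R h_free).
Qed.

Lemma elim_clause_noncomplementary c : ~~ complementary (cl_h1 c) (cl_h2 c) ->
  (forall R : {set n.-tuple (dom M)}, eval_clause (set_rel s N R) v c) <->
  eval_clause s v (map_heads drop_head c).
Proof.
case: c => ls h1 h2 /= ncomp; split=> [allR|]; last first.
  rewrite /eval_clause /= => /or3P[lits|/drop_head_sound h1R|/drop_head_sound h2R] R;
    by rewrite ?lits ?h1R ?h2R ?orbT.
(* All occurrences of R_N have the same sign p0, and [kill_rel p0] falsifies them. *)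
pose p0 := if sign_of h1 is Some p then p else if sign_of h2 is Some p then p else true.
have kill_p0 h : sign_of h \in [:: None; Some p0] ->
    eval_head (set_rel s N (kill_rel p0)) v h -> eval_head s v (drop_head h).
  case h_free: (sign_of h) => [p|]; last by rewrite (eval_drop_head (kill_rel p0) h_free).
  by rewrite !inE => /eqP [p_p0]; rewrite eval_head_kill // h_free p_p0.
have [h1_p0 h2_p0] : sign_of h1 \in [:: None; Some p0] /\ sign_of h2 \in [:: None; Some p0].
  by move: ncomp; rewrite /p0 /complementary; case: (sign_of h1) => [[]|];
    case: (sign_of h2) => [[]|].
have := allR (kill_rel p0); rewrite /eval_clause /=.
by case/or3P=> [->|/(kill_p0 _ h1_p0) ->|/(kill_p0 _ h2_p0) ->]; rewrite ?orbT.
Qed.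

Lemma exists_rel_of_var (i : 'I_(size ar)) (R : {set n.-tuple (dom M)}) (x : seq (dom M)) :
  i = N :> nat -> rel_of R x -> [exists t : (nth 0 ar i).-tuple (dom M), rel_of R t].
Proof.
by move=> iN Rx; have sz_x := rel_of_size Rx; apply: exists_tuple_of Rx; rewrite sz_x iN arN.
Qed.

Lemma elim_clauseP c :
  (forall R : {set n.-tuple (dom M)}, eval_clause (set_rel s N R) v c) <->
  all (eval_clause s v) (elim_clause c).
Proof.
rewrite /elim_clause; case: ifP => [comp|/negbT ncomp]; last first.
  by rewrite /= andbT; apply: elim_clause_noncomplementary.
case: c comp => ls [p1 i1 z1|i1|] [p2 i2 z2|i2|]; rewrite /complementary /=;
  do 2?case: ifP => //; try done.
- move=> /eqP i2N /eqP i1N p12; have -> : p2 = ~~ p1 by case: p1 p2 p12 => [] [].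
  have sz1 := size_map_var z1 i1N; have sz2 := size_map_var z2 i2N.
  rewrite all_map (@eq_all _ _ (fun a => (v a.1 == v a.2) || has (eval_lit v) ls)); last first.
    by move=> a; rewrite /eval_clause /= eqb_id !orbF.
  rewrite all_zip_eq_orb; last by rewrite -(size_map v z1) -(size_map v z2) sz1 sz2.
  rewrite /eval_clause /= /set_rel (introT eqP i1N) (introT eqP i2N).
  by apply: forall_rel_complementary.
- move=> /eqP i2N /eqP i1N; case: p1 => // _; split=> // _ R.
  rewrite /eval_clause /= /set_rel (introT eqP i1N) (introT eqP i2N).
  case z1R: (rel_of R _); last by rewrite /= orbT.
  by rewrite (exists_rel_of_var i2N z1R) !orbT.
- move=> /eqP i2N /eqP i1N; case: p2 => // _; split=> // _ R.
  rewrite /eval_clause /= /set_rel (introT eqP i1N) (introT eqP i2N).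
  case z2R: (rel_of R _); last by rewrite /= !orbT.
  by rewrite (exists_rel_of_var i1N z2R) orbT.
Qed.

Lemma elim_clausesP (cls : seq (clause tau m ar)) :
  (forall R : {set n.-tuple (dom M)}, all (eval_clause (set_rel s N R) v) cls) <->
  all (eval_clause s v) (flatten (map elim_clause cls)).
Proof.
elim: cls => [|c cls IH] //=; rewrite all_cat.
split=> [allR|/andP[elim_c elim_cls] R].
- apply/andP; split; [apply/elim_clauseP | apply/IH] => R; by case/andP: (allR R).
- by rewrite ((elim_clauseP c).2 elim_c R) (IH.2 elim_cls R).
Qed.

End Elimination.

Definition drop_last_forall tau m pre n
    (cls : seq (clause tau m (map snd (rcons pre (false, n))))) : sokrom tau :=
  @SOKrom tau m pre (flatten (map (elim_clause (map snd pre) (size pre)) cls)).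

Lemma sat_drop_last_forall tau (M : structure tau) m pre n
    (cls : seq (clause tau m (map snd (rcons pre (false, n))))) :
  sat M (drop_last_forall cls) <-> sat M (@SOKrom tau m (rcons pre (false, n)) cls).
Proof.
rewrite /sat /=; apply: iff_sym; apply: iff_trans (eval_pre_rcons_forall _ _ _ _ _) _.
apply: eval_pre_ext => s; rewrite add0n.
have ar2_ar i : i < size (map snd (rcons pre (false, n))) -> i != size pre ->
    i < size (map snd pre) /\ nth 0 (map snd pre) i = nth 0 (map snd (rcons pre (false, n))) i.
  rewrite map_rcons size_rcons nth_rcons !size_map ltnS leq_eqVlt => /orP[/eqP ->|->] //.
  by rewrite eqxx.
have arN : nth 0 (map snd (rcons pre (false, n))) (size pre) = n.
  by rewrite map_rcons nth_rcons size_map ltnn eqxx.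
split=> [allR v | allv R v].
- by apply/(elim_clausesP ar2_ar arN) => R; apply: allR.
- exact: (elim_clausesP ar2_ar arN s v cls).2 (allv v) R.
Qed.

Definition quants tau (phi : sokrom tau) : seq bool := map fst (so_pre phi).

Lemma alternations_rcons (s : seq bool) b :
  alternations (rcons s b) = alternations s + (last b s != b).
Proof.
elim: s => [|q s IH]; first by rewrite /= eqxx.
by case: s IH => [|q2 s] /= IH; rewrite ?addn0 // IH addnA.
Qed.

Lemma last_alternations q s : last q s = q (+) odd (alternations (q :: s)).
Proof.
elim: s q => [|q2 s IH] q; first by rewrite /= addbF.
rewrite -[last q _]/(last q2 s) IH.
rewrite -[alternations (q :: _)]/((q != q2) + alternations (q2 :: s)) oddD oddb.
by case: q; case: q2; case: (odd _).
Qed.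

Lemma split_forall_block q s : last q s = false -> 0 < alternations (q :: s) ->
  exists s' j, s = s' ++ nseq j false /\ alternations (q :: s') = (alternations (q :: s)).-1.
Proof.
elim/last_ind: s => [|s b IH] //; rewrite last_rcons => -> {b}.
rewrite -rcons_cons alternations_rcons /=.
case last_s: (last q s) IH => IH; first by exists s, 1; rewrite cats1 addn1.
rewrite addn0 => /(IH erefl) [s' [j [-> alt_s']]].
by exists s', j.+1; rewrite -cats1 -catA -addn1 nseqD.
Qed.

Lemma elim_forall_last tau (phi : sokrom tau) s :
  quants phi = rcons s false ->
  exists2 psi : sokrom tau, quants psi = s & forall M, sat M phi <-> sat M psi.
Proof.
case: phi => m pre cls; rewrite /quants /=.
case/lastP: pre cls => [|pre [q n]] cls; first by case: s.
rewrite map_rcons => /rcons_inj [<- /= q_false]; subst q.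
by exists (drop_last_forall cls) => // M; apply: iff_sym; apply: sat_drop_last_forall.
Qed.

Lemma elim_forall_suffix tau (phi : sokrom tau) s j :
  quants phi = s ++ nseq j false ->
  exists2 psi : sokrom tau, quants psi = s & forall M, sat M phi <-> sat M psi.
Proof.
elim: j s phi => [|j IH] s phi; first by rewrite cats0 => <-; exists phi.
rewrite /= -cat_rcons => /IH [psi' /elim_forall_last [psi <- psi'_psi] phi_psi'].
by exists psi => // M; apply: iff_trans (phi_psi' M) (psi'_psi M).
Qed.

(* [SigmaKrom k] and [PiKrom k] are [krom_class true k] and [krom_class false k]
   up to conversion. *)
Definition krom_class (b : bool) (k : nat) : fragment := fun tau phi =>
  head (~~ b) (quants phi) = b /\ alternations (quants phi) = k.-1.

Lemma krom_class_succ b k : 0 < k -> odd k = b ->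
  frag_equiv (krom_class b k) (krom_class b k.+1).
Proof.
case: k => // k _ /= odd_k; have {}odd_k : odd k = ~~ b by rewrite -odd_k negbK.
split=> tau phi [].
all: case E: (quants phi) => [|q r]; first by case: (b).
all: move=> head_q alt_r; have {head_q} q_b : q = b := head_q; subst q.
all: have := last_alternations b r; rewrite alt_r.
- rewrite odd_k addbN addbb /= => last_r.
  exists (append_forall phi); split; last by move=> M _; apply: iff_sym; apply: sat_append_forall.
  rewrite /krom_class /quants map_rcons -/(quants phi) E.
  by rewrite alternations_rcons alt_r /= last_r addn1.
- rewrite /= odd_k negbK addbb => last_r.
  have [|s' [j [r_s' alt_s']]] := split_forall_block last_r; first by rewrite alt_r.
  have [|psi psi_q phi_psi] := @elim_forall_suffix _ phi (b :: s') j; first by rewrite E r_s'.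
  by exists psi; split=> [|M _]; [rewrite /krom_class psi_q alt_s' alt_r | apply: phi_psi].
Qed.

Theorem corollary2p2 (k : nat) : 1 <= k ->
  (odd k -> frag_equiv (SigmaKrom k) (SigmaKrom k.+1)) /\
  (~~ odd k -> frag_equiv (PiKrom k) (PiKrom k.+1)).
Proof.
move=> k_gt0; split=> [odd_k | even_k].
- exact: krom_class_succ k_gt0 odd_k.
- exact: krom_class_succ k_gt0 (negbTE even_k).
Qed.
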